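(* Let $n\ge k\ge 1$ and $s\ge t \ge 0$ be integers. If $\mathcal{H} \subset EM(n,k,s,t)$ and $|\mathcal{H}| = m$, then $|\partial\mathcal{H}|\ge |\partial L_{m}EM(n,k,s,t)|$.
   Context: $[n]=\{1,\dots,n\}$, $\binom{[n]}{k}$ is the family of $k$-subsets of $[n]$. For $0\le t\le\min\{k,s\}$, $EM(n,k,s,t)=\{A\in\binom{[n]}{k}: |A\cap[s]|\ge t\}$; $EM(n,k,s,t)=\emptyset$ if $t>\min\{k,s\}$, and $=\binom{[n]}{k}$ if $n\le s$. $\partial\mathcal{H}=\{A\in\binom{[n]}{k-1}: A\subset B\text{ for some }B\in\mathcal{H}\}$. Colex order: $A\prec B$ iff $\max\big((A\setminus B)\cup(B\setminus A)\big)\in B$; $L_m\mathcal{F}$ is the set of the first $m$ members of $\mathcal{F}$ in colex order. *)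

(* Ground set [n] = {1,...,n} is modelled by 'I_n,
   the ordinal i : 'I_n standing for the integer i+1. *)
From mathcomp Require Import all_boot.
Set Implicit Arguments. Unset Strict Implicit. Unset Printing Implicit Defensive.

(* |A ∩ [s]| : elements i+1 <= s, i.e. i < s *)
Definition EM (n k s t : nat) : {set {set 'I_n}} :=
  [set A : {set 'I_n} | (#|A| == k) && (t <= #|[set i in A | (i : nat) < s]|)].

Definition shadow (n k : nat) (H : {set {set 'I_n}}) : {set {set 'I_n}} :=
  [set B : {set 'I_n} | (#|B| == k.-1) && [exists A in H, B \subset A]].

Definition colex_lt (n : nat) (A B : {set 'I_n}) : bool :=
  [exists x in B :\: A,
     [forall y in (A :\: B) :|: (B :\: A), (y : nat) <= x]].

Definition firstm (n : nat) (m : nat) (F : {set {set 'I_n}}) : {set {set 'I_n}} :=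
  [set A in F | #|[set B in F | colex_lt B A]| < m].

From mathcomp Require Import all_boot zify.
Set Implicit Arguments. Unset Strict Implicit. Unset Printing Implicit Defensive.

(* Shifting argument in the style of Frankl's proof of Kruskal-Katona.  For
   disjoint U, V of equal size with U before V in colex, the (U, V)-shift
   replaces V by U inside a member A of the family whenever the result still
   meets [s] in at least t points.  Shifting a family H inside EM(n,k,s,t)
   keeps its size, keeps it inside EM(n,k,s,t) and lowers the binary weight
   sum of 2^i unless H is already shifted.  If (U, V) is an unshifted pair of
   minimal rank |U| + |V cap [s]|, then H is shifted along the smaller pairs
   obtained by dropping one point from U and from V, or by trading a point of
   V cap [s] for one outside [s]; this makes B |-> (B \ U) u V an injection from
   the sets gained in the shadow to the sets lost, so the shadow does not grow.
   A family shifted along every colex pair is a colex initial segment of EM. *)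

Lemma big_setU_disjoint (R : Type) (idx : R) (op : Monoid.com_law idx)
    (I : finType) (X Y : {set I}) (F : I -> R) :
  [disjoint X & Y] ->
  \big[op/idx]_(i in X :|: Y) F i =
    op (\big[op/idx]_(i in X) F i) (\big[op/idx]_(i in Y) F i).
Proof. by move=> dXY; rewrite -bigU //; apply: eq_bigl => i; rewrite !inE. Qed.

Lemma cardsU_disjoint (T : finType) (X Y : {set T}) :
  [disjoint X & Y] -> #|X :|: Y| = #|X| + #|Y|.
Proof. by move=> dXY; rewrite -!sum1_card big_setU_disjoint. Qed.

Lemma ltn_sum_set (I : finType) (A : {set I}) (E1 E2 : I -> nat) :
  A != set0 -> {in A, forall i, E1 i < E2 i} ->
  \sum_(i in A) E1 i < \sum_(i in A) E2 i.
Proof.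
case/set0Pn=> a aA ltE; rewrite !(big_setD1 a aA) /=.
have : \sum_(i in A :\ a) E1 i <= \sum_(i in A :\ a) E2 i.
  by apply: leq_sum => i /setD1P[_ /ltE/ltnW].
by have := ltE a aA; lia.
Qed.

Lemma leq_card_setD_inj (T : finType) (X Y : {set T}) (f : T -> T) :
  {in X :\: Y &, injective f} -> {in X :\: Y, forall x, f x \in Y :\: X} ->
  #|X| <= #|Y|.
Proof.
move=> f_inj fXY; have : #|X :\: Y| <= #|Y :\: X|.
  rewrite -(card_in_imset f_inj); apply: subset_leq_card.
  by apply/subsetP=> _ /imsetP[x xXY ->]; exact: fXY.
by have := cardsID Y X; have := cardsID X Y; rewrite setIC; lia.
Qed.

Lemma subset_cardS (T : finType) (B C : {set T}) :
  B \subset C -> #|C| = #|B|.+1 -> exists2 w, w \notin B & C = w |: B.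
Proof.
move=> sBC cC; have /subsetPn[w wC wB] : ~~ (C \subset B).
  by apply: contraTN isT => /subset_leq_card; rewrite cC ltnn.
exists w => //; apply/esym/eqP; rewrite eqEcard cC cardsU1 wB leqnn andbT.
by apply/subsetP=> i /setU1P[->//|/(subsetP sBC)].
Qed.

Lemma colex_ltxx n (A : {set 'I_n}) : ~~ colex_lt A A.
Proof. by apply/exists_inP=> -[x]; rewrite setDv inE. Qed.

Lemma colex_total n (A B : {set 'I_n}) : A != B -> colex_lt A B || colex_lt B A.
Proof.
move=> neqAB; set D := (A :\: B) :|: (B :\: A).
have /set0Pn[i0 i0D] : D != set0.
  apply: contra neqAB => /eqP D0; apply/eqP/setP=> i.
  by move/setP/(_ i): D0; rewrite !inE; case: (i \in A); case: (i \in B).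
have [x xD maxx] := @arg_maxnP _ i0 (mem D) val i0D.
case/setUP: (xD) => [xAB|xBA]; apply/orP; [right|left]; apply/exists_inP;
  exists x => //; apply/forall_inP=> y yD; apply: maxx => //.
by rewrite /D setUC.
Qed.

Lemma colex_lt_disjoint n (A B : {set 'I_n}) : [disjoint A & B] ->
  colex_lt A B = [exists x in B, [forall y in A :|: B, (y : nat) <= x]].
Proof.
move=> dAB; rewrite /colex_lt.
have -> : A :\: B = A by apply/setDidPl.
by have -> : B :\: A = B by apply/setDidPl; rewrite disjoint_sym.
Qed.

Lemma firstm_downset n (G F : {set {set 'I_n}}) : F \subset G ->
  (forall A B, A \in F -> B \in G -> colex_lt B A -> B \in F) ->
  firstm #|F| G = F.
Proof.
move=> sFG downF; apply/setP=> A; rewrite inE.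
have [AF|AnF] := boolP (A \in F); rewrite ?(subsetP sFG _ AF) /=.
  rewrite (cardsD1 A F) AF add1n ltnS subset_leq_card //.
  apply/subsetP=> B; rewrite !inE => /andP[BG ltBA]; rewrite (downF A) // andbT.
  by apply: contraTneq ltBA => ->; apply: colex_ltxx.
apply/negbTE/andP=> -[AG]; apply/negP; rewrite -leqNgt.
apply: subset_leq_card; apply/subsetP=> B BF; rewrite inE (subsetP sFG _ BF) /=.
have /colex_total/orP[//|ltAB] : B != A by apply: contraNneq AnF => <-.
by case/negP: AnF; apply: downF ltAB.
Qed.

Section Compression.
Variables n k s t : nat.
Local Notation T := {set 'I_n}.
Local Notation EMk := (EM n k s t).

Definition lowset : T := [set i : 'I_n | i < s].
Definition low (X : T) : nat := #|X :&: lowset|.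

Lemma EM_low (A : T) : (A \in EMk) = (#|A| == k) && (t <= low A).
Proof. by rewrite inE; congr (_ && (t <= _)); apply: eq_card => i; rewrite !inE. Qed.

Lemma lowD1 (X : T) x : x \in X -> low X = (x < s) + low (X :\ x).
Proof. by move=> xX; rewrite /low (cardsD1 x) !inE xX setIDAC. Qed.

Lemma lowU1 (X : T) x : x \notin X -> low (x |: X) = (x < s) + low X.
Proof. by move=> xX; rewrite (lowD1 (setU11 x X)) setU1K. Qed.

Lemma low_lowset (X : T) : X \subset lowset -> low X = #|X|.
Proof. by move=> sXL; rewrite /low (setIidPl sXL). Qed.

Definition swap (U V A : T) : T := (A :\: V) :|: U.

Lemma swapIr (U V A L : T) : swap U V A :&: L = swap (U :&: L) (V :&: L) (A :&: L).
Proof. by apply/setP=> i; rewrite !inE; case: (i \in L); rewrite ?andbF ?andbT. Qed.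

Lemma sum_swap (f : 'I_n -> nat) (U V A : T) : V \subset A -> [disjoint U & A] ->
  \sum_(i in swap U V A) f i + \sum_(i in V) f i =
    \sum_(i in A) f i + \sum_(i in U) f i.
Proof.
move=> sVA dUA; rewrite big_setU_disjoint; last first.
  by rewrite disjoint_sym (disjointWr (subsetDl A V)).
by rewrite [in RHS](big_setID V) (setIidPr sVA) /=; lia.
Qed.

Lemma cards_swap (U V A : T) : V \subset A -> [disjoint U & A] ->
  #|swap U V A| + #|V| = #|A| + #|U|.
Proof. by rewrite -!sum1_card; apply: sum_swap. Qed.

Lemma low_swap (U V A : T) : V \subset A -> [disjoint U & A] ->
  low (swap U V A) + low V = low A + low U.
Proof.
move=> sVA dUA; rewrite /low swapIr cards_swap ?setSI //.
exact: disjointW (subsetIl U lowset) (subsetIl A lowset) dUA.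
Qed.

Lemma swapK (U V A : T) : V \subset A -> [disjoint U & A] -> [disjoint U & V] ->
  swap V U (swap U V A) = A.
Proof.
move=> sVA dUA dUV; apply/setP=> i; rewrite !inE.
have [iV|iV] := boolP (i \in V); first by rewrite orbT (subsetP sVA).
have [iU|_] := boolP (i \in U); last by rewrite !orbF.
by rewrite (disjointFr dUA iU).
Qed.

Definition compress (U V A : T) : T :=
  if [&& V \subset A, [disjoint U & A] & t <= low (swap U V A)]
  then swap U V A else A.

Lemma compressE (U V A : T) : V \subset A -> [disjoint U & A] ->
  t <= low (swap U V A) -> compress U V A = swap U V A.
Proof. by rewrite /compress => -> -> ->. Qed.

Lemma compressP (U V A : T) : compress U V A != A ->
  [/\ V \subset A, [disjoint U & A], t <= low (swap U V A)
    & compress U V A = swap U V A].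
Proof. by rewrite /compress; case: ifP => [/and3P[]|]; rewrite ?eqxx. Qed.

Lemma compress_inj (U V : T) : [disjoint U & V] ->
  {in [pred A | compress U V A != A] &, injective (compress U V)}.
Proof.
move=> dUV A1 A2 /compressP[sVA1 dUA1 _ ->] /compressP[sVA2 dUA2 _ ->] eq12.
by rewrite -(swapK sVA1 dUA1 dUV) -(swapK sVA2 dUA2 dUV) eq12.
Qed.

Lemma compress_EM (U V A : T) : #|U| = #|V| -> A \in EMk -> compress U V A \in EMk.
Proof.
move=> eUV; have [-> //|/compressP[sVA dUA lowA ->]] := eqVneq (compress U V A) A.
by rewrite !EM_low lowA andbT; have := cards_swap sVA dUA; rewrite eUV; lia.
Qed.

Definition compress_fam (U V : T) (F : {set T}) : {set T} :=
  [set A in F | compress U V A \in F] :|: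
  [set compress U V A | A in [set A in F | compress U V A \notin F]].

Definition compressed (U V : T) (F : {set T}) := [forall A in F, compress U V A \in F].

Lemma compressed0 (F : {set T}) : compressed set0 set0 F.
Proof. by apply/forall_inP=> A AF; rewrite /compress /swap setD0 setU0; case: ifP. Qed.

Lemma compress_moved_inj (U V : T) (F : {set T}) : [disjoint U & V] ->
  {in [set A in F | compress U V A \notin F] &, injective (compress U V)}.
Proof.
move=> dUV A1 A2; rewrite !inE => /andP[A1F cA1] /andP[A2F cA2].
have moved A : A \in F -> compress U V A \notin F -> compress U V A != A.
  by move=> AF; apply: contraNneq => ->.
by apply: compress_inj; rewrite // inE moved.
Qed.

Lemma compress_moved_disjoint (U V : T) (F : {set T}) :
  [disjoint [set A in F | compress U V A \in F] &
            [set compress U V A | A in [set A in F | compress U V A \notin F]]].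
Proof.
rewrite disjoint_sym disjoint_subset; apply/subsetP=> X /imsetP[A].
by rewrite !inE => /andP[_ cA] ->; rewrite (negbTE cA).
Qed.

Lemma card_compress_fam (U V : T) (F : {set T}) :
  [disjoint U & V] -> #|compress_fam U V F| = #|F|.
Proof.
move=> dUV; rewrite cardsU_disjoint ?compress_moved_disjoint //.
rewrite card_in_imset; last exact: compress_moved_inj.
rewrite -(cardsID [set A | compress U V A \in F] F); congr (_ + _);
  by apply: eq_card => A; rewrite !inE andbC.
Qed.

Lemma compress_fam_EM (U V : T) (F : {set T}) : #|U| = #|V| -> F \subset EMk ->
  compress_fam U V F \subset EMk.
Proof.
move=> eUV sFE; apply/subsetP=> X /setUP[|/imsetP[A]].
  by rewrite inE => /andP[/(subsetP sFE)].
by rewrite inE => /andP[/(subsetP sFE) AE _] ->; exact: compress_EM.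
Qed.

Definition colex_pair (U V : T) :=
  [&& [disjoint U & V], #|U| == #|V| & colex_lt U V].

Lemma colex_pairP (U V : T) :
  reflect [/\ [disjoint U & V], #|U| = #|V|
            & exists2 x, x \in V & {in U :|: V, forall y : 'I_n, y <= x}]
          (colex_pair U V).
Proof.
apply: (iffP and3P) => -[dUV /eqP eUV]; rewrite colex_lt_disjoint //.
  by case/exists_inP=> x xV /forall_inP maxx; split=> //; exists x.
by case=> x xV maxx; split=> //; apply/exists_inP; exists x => //; apply/forall_inP.
Qed.

(* Shifting along a colex pair strictly decreases this weight, so repeated
   shifting terminates. *)
Definition weight (A : T) : nat := \sum_(i in A) 2 ^ (i : nat).
Definition fam_weight (F : {set T}) : nat := \sum_(A in F) weight A.

Lemma weight_lt_exp2 (X : T) (x : 'I_n) :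
  {in X, forall i : 'I_n, i < x} -> weight X < 2 ^ x.
Proof.
move=> ltXx; apply: (@leq_ltn_trans (\sum_(i < n | i < x) 2 ^ i)).
  rewrite (bigID (mem X)) /=; apply: leq_trans (leq_addr _ _); apply: eq_leq.
  by apply: eq_bigl => i; case: (boolP (i \in X)) => [/ltXx->|]; rewrite ?andbF.
rewrite -(big_ord_widen n (fun i => 2 ^ i) (ltnW (ltn_ord x))).
by have := predn_exp 2 x; rewrite mul1n => <-; rewrite prednK // expn_gt0.
Qed.

Lemma weight_swap_lt (U V A : T) : colex_pair U V -> V \subset A -> [disjoint U & A] ->
  weight (swap U V A) < weight A.
Proof.
case/colex_pairP=> dUV _ [x xV maxx] sVA dUA.
have ltUV : weight U < weight V.
  apply: (@leq_trans (2 ^ x)); last by rewrite /weight (big_setD1 x xV) leq_addr.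
  apply: weight_lt_exp2 => i iU; rewrite ltn_neqAle maxx ?inE ?iU // andbT.
  by apply: contraTneq iU => /val_inj ->; rewrite (disjointFl dUV xV).
by have := sum_swap (fun i : 'I_n => 2 ^ i) sVA dUA; rewrite -!/(weight _); lia.
Qed.

Lemma fam_weight_compress_lt (U V : T) (F : {set T}) :
  colex_pair U V -> ~~ compressed U V F ->
  fam_weight (compress_fam U V F) < fam_weight F.
Proof.
move=> uUV /forall_inPn[A0 A0F cA0].
have dUV : [disjoint U & V] by case/colex_pairP: uUV.
set M := [set A in F | compress U V A \notin F].
rewrite /fam_weight big_setU_disjoint ?compress_moved_disjoint //.
rewrite big_imset /=; last exact: compress_moved_inj.
rewrite [in X in _ < X](bigID (fun A => compress U V A \in F)) /=.
have eP : \sum_(A in F | compress U V A \in F) weight A =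
          \sum_(A in [set A in F | compress U V A \in F]) weight A.
  by apply: eq_bigl => A; rewrite !inE.
have eM : \sum_(A in F | compress U V A \notin F) weight A = \sum_(A in M) weight A.
  by apply: eq_bigl => A; rewrite !inE.
rewrite eP eM ltn_add2l; apply: ltn_sum_set => [|A].
  by apply/set0Pn; exists A0; rewrite inE A0F.
rewrite inE => /andP[AF cA].
have /compressP[sVA dUA _ ->] : compress U V A != A by apply: contraNneq cA => ->.
exact: weight_swap_lt.
Qed.

Lemma compressed_colex_downset (F : {set T}) : F \subset EMk ->
  (forall U V, colex_pair U V -> compressed U V F) ->
  forall A B, A \in F -> B \in EMk -> colex_lt B A -> B \in F.
Proof.
move=> sFE cF A B AF BE ltBA.
move: (subsetP sFE A AF) (BE); rewrite !EM_low => /andP[/eqP cA _] /andP[/eqP cB lowB].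
have uBA : colex_pair (B :\: A) (A :\: B).
  apply/colex_pairP; split.
  - rewrite disjoint_subset; apply/subsetP=> i /setDP[_ iA].
    by rewrite !inE (negbTE iA) andbF.
  - by have := cardsID A B; have := cardsID B A; rewrite setIC; lia.
  - by case/exists_inP: ltBA => x xAB /forall_inP maxx; exists x.
have dBA : [disjoint B :\: A & A].
  by rewrite disjoint_subset; apply/subsetP=> i /setDP[_ iA]; rewrite inE.
have eB : swap (B :\: A) (A :\: B) A = B.
  by apply/setP=> i; rewrite !inE; case: (i \in A); case: (i \in B).
have := forall_inP (cF _ _ uBA) A AF.
by rewrite compressE ?subsetDl ?eB.
Qed.

Lemma low_subset (X Y : T) : X \subset Y -> low X <= low Y.
Proof. by move=> sXY; apply/subset_leq_card/setSI. Qed.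

Lemma low_leD1 (X : T) x : low X <= (low (X :\ x)).+1.
Proof.
have [xX|xX] := boolP (x \in X); last first.
  by rewrite (setDidPl _); rewrite 1?disjoint_sym ?disjoints1.
by rewrite (lowD1 xX) -[(low _).+1]add1n leq_add2r leq_b1.
Qed.

Lemma swapD1U (U V D : T) x : x \notin D :\: V -> swap (U :\ x) V D = swap U V D :\ x.
Proof.
move=> xD; apply/setP=> i; rewrite !inE.
by case: (eqVneq i x) => [->|] /=; rewrite ?orbF -?in_setD ?(negbTE xD).
Qed.

Lemma swapD1V (U V D : T) y : y \in D -> swap U (V :\ y) D = y |: swap U V D.
Proof.
move=> yD; apply/setP=> i; rewrite !inE.
by case: (eqVneq i y) => [->|] /=; rewrite ?yD ?andbT ?orbT.
Qed.

Lemma swapU1V (U V D : T) w : w \notin U -> swap U (w |: V) D = swap U V D :\ w.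
Proof.
move=> wU; apply/setP=> i; rewrite !inE.
by case: (eqVneq i w) => [->|] /=; rewrite ?(negbTE wU) ?andbF.
Qed.

Lemma swapD1A (U V A : T) z : z \notin U -> swap U V (A :\ z) = swap U V A :\ z.
Proof.
move=> zU; apply/setP=> i; rewrite !inE.
by case: (eqVneq i z) => [->|] /=; rewrite ?(negbTE zU) ?andbF.
Qed.

Section ShadowOfCompression.
Variables (U V : T) (F : {set T}).
Hypotheses (F_EM : F \subset EMk) (dUV : [disjoint U & V]) (eUV : #|U| = #|V|).
Hypothesis V_neq0 : V != set0.
(* Both hypotheses below hold when F is shifted along every colex pair of
   smaller [pair_rank] than (U, V); see section MinimalPair. *)
Hypothesis compressed_drop : forall x, x \in U ->
  exists2 y, y \in V & ((y < s) || (low V == 0)) && compressed (U :\ x) (V :\ y) F.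
Hypothesis compressed_trade : forall w, w \notin U -> w \notin V -> s <= w ->
  low U < low V -> exists2 v, v \in V & (v < s) && compressed U (w |: V :\ v) F.

Lemma swap_drop_covered D x : D \in F -> x \in U -> V \subset D ->
  [disjoint U :\ x & D] -> t <= low D -> t <= (low (swap (U :\ x) V D)).+1 ->
  exists2 C, C \in F & swap (U :\ x) V D \subset C.
Proof.
move=> DF xU sVD dUD lowD lowS.
have [y yV /andP[ylow /forall_inP cl]] := compressed_drop xU.
have sVyD : V :\ y \subset D := subset_trans (subD1set V y) sVD.
have eC : swap (U :\ x) (V :\ y) D = y |: swap (U :\ x) V D.
  exact/swapD1V/(subsetP sVD).
have lowC : t <= low (swap (U :\ x) (V :\ y) D).
  rewrite eC lowU1; last by rewrite !inE yV (disjointFl dUV yV) andbF.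
  case/orP: ylow => [-> // | /eqP lowV0].
  apply: leq_trans lowD (leq_trans _ (leq_addl _ _)).
  by have := low_swap sVD dUD; rewrite lowV0 addn0 => ->; apply: leq_addr.
exists (swap (U :\ x) (V :\ y) D); first by rewrite -(compressE sVyD dUD lowC) cl.
by rewrite eC subsetUr.
Qed.

Lemma swap_trade_covered D w : D \in F -> w \in D -> w \notin U -> w \notin V ->
  s <= w -> V \subset D -> [disjoint U & D] -> low U < low V ->
  t <= (low (swap U V D)).+1 ->
  exists2 C, C \in F & swap U V D :\ w \subset C.
Proof.
move=> DF wD wU wV sw sVD dUD lowUV lowS.
have [v vV /andP[vs /forall_inP cl]] := compressed_trade wU wV sw lowUV.
have sV'D : w |: V :\ v \subset D.
  by apply/subsetP=> i /setU1P[->//|/setD1P[_ /(subsetP sVD)]].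
have vw : v != w by apply: contraTneq vV => ->.
have eC : swap U (w |: V :\ v) D = v |: (swap U V D :\ w).
  rewrite swapU1V // swapD1V ?(subsetP sVD) //.
  by apply/setP=> i; rewrite !inE; case: (eqVneq i v) => [->|]; rewrite ?vw.
have lowC : t <= low (swap U (w |: V :\ v) D).
  rewrite eC lowU1 ?vs; last by rewrite !inE vV (disjointFl dUV vV) andbF.
  have wS : w \in swap U V D by rewrite !inE wV wD.
  by have := lowD1 wS; rewrite ltnNge sw add0n => <-.
exists (swap U (w |: V :\ v) D); first by rewrite -(compressE sV'D dUD lowC) cl.
by rewrite eC subsetUr.
Qed.

Lemma neighbour_covered (A : T) (z w : 'I_n) : A \in F -> V \subset A ->
  [disjoint U & A] -> t <= low (swap U V A) -> z \in A -> z \notin V -> w \notin A ->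
  w |: A :\ z \in F -> compress U V (w |: A :\ z) \in F ->
  exists2 C, C \in F & swap U V A :\ z \subset C.
Proof.
move=> AF sVA dUA lowA zA zV wA DF cDF; set D := w |: A :\ z.
have zU : z \notin U by rewrite (disjointFl dUA zA).
have wV : w \notin V by apply: contra wA => /(subsetP sVA).
have wz : w != z by apply: contraNneq wA => ->.
have sVD : V \subset D.
  apply/subsetP=> i iV; have iz : i != z by apply: contraTneq iV => ->.
  by rewrite !inE iz (subsetP sVA) // orbT.
have lowD : t <= low D by move: (subsetP F_EM _ DF); rewrite EM_low => /andP[].
have lowAz : t <= (low (swap U V A :\ z)).+1 := leq_trans lowA (low_leD1 _ z).
have [wU|wU] := boolP (w \in U).
  have eD : swap (U :\ w) V D = swap U V A :\ z.
    apply/setP=> i; rewrite !inE; case: (eqVneq i w) => [->|iw] /=.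
      by rewrite wV wz wU orbT.
    by case: (eqVneq i z) => [->|] //=; rewrite (negbTE zV) (negbTE zU) andbF.
  have dUD : [disjoint U :\ w & D].
    rewrite disjoint_subset; apply/subsetP=> i; rewrite !inE => /andP[iw iU].
    by rewrite negb_or iw (disjointFr dUA iU) andbF.
  by rewrite -eD; apply: swap_drop_covered; rewrite ?eD.
have dUD : [disjoint U & D].
  rewrite disjoint_subset; apply/subsetP=> i iU; rewrite !inE (disjointFr dUA iU).
  by rewrite andbF orbF; apply: contraNneq wU => <-.
have eDw : swap U V D :\ w = swap U V A :\ z.
  apply/setP=> i; rewrite !inE; case: (eqVneq i w) => [->|iw] /=.
    by rewrite (negbTE wA) (negbTE wU) andbF /= andbF.
  by case: (eqVneq i z) => [->|] /=; rewrite ?(negbTE zU) ?andbF.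
have [lowS|lowS] := leqP t (low (swap U V D)).
  exists (swap U V D); first by rewrite -(compressE sVD dUD lowS).
  by rewrite -eDw subD1set.
have wS : w \in swap U V D by rewrite !inE eqxx wV.
have sw : s <= w.
  rewrite leqNgt; apply: contraTN lowS => ws; rewrite -leqNgt.
  by move: lowAz; rewrite -eDw (lowD1 wS) ws.
have lowUV : low U < low V.
  rewrite -(ltn_add2l (low D)) -(low_swap sVD dUD) ltn_add2r.
  exact: leq_trans lowS lowD.
rewrite -eDw; apply: (swap_trade_covered DF (setU11 w _) wU wV sw sVD dUD lowUV).
by apply: leq_trans lowAz _; rewrite -eDw ltnS low_subset ?subD1set.
Qed.

Lemma compress_fam_supset (X : T) : X \in compress_fam U V F -> V \subset X ->
  X \in F /\ compress U V X \in F.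
Proof.
case/setUP=> [|/imsetP[A]]; first by rewrite inE => /andP.
rewrite inE => /andP[AF cAnF] -> sVX; exfalso.
have /compressP[_ _ _ eA] : compress U V A != A by apply: contraNneq cAnF => ->.
have /set0Pn[v vV] := V_neq0; move: (subsetP sVX v vV).
by rewrite eA !inE vV (disjointFl dUV vV).
Qed.

Lemma new_shadow_member B :
  B \in shadow k (compress_fam U V F) -> B \notin shadow k F ->
  exists A z, [/\ A \in F, compress U V A \notin F, z \notin B
                & compress U V A = z |: B].
Proof.
rewrite !inE => /andP[/eqP cB /exists_inP[A' A'F' sBA']]; rewrite cB eqxx /=.
move/exists_inPn=> notcov.
case/setUP: (A'F') => [|/imsetP[A]]; first by rewrite inE => /andP[/notcov/negP].
rewrite inE => /andP[AF cAnF] eA'.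
have : A' \in EMk by apply: subsetP A'F'; apply: compress_fam_EM.
rewrite EM_low => /andP[/eqP cA' _].
have /compressP[sVA _ _ _] : compress U V A != A by apply: contraNneq cAnF => ->.
have [w wB eA'w] : exists2 w, w \notin B & A' = w |: B.
  apply: subset_cardS => //; rewrite cA' cB prednK //.
  have := subsetP F_EM A AF; rewrite EM_low => /andP[/eqP <- _].
  by apply: leq_trans (subset_leq_card sVA); rewrite card_gt0.
by exists A, w; split; rewrite // -eA'.
Qed.

Lemma shadow_neighbour_covered (A : T) z : A \in F -> V \subset A -> [disjoint U & A] ->
  t <= low (swap U V A) -> swap U V A \notin F -> z \in A -> z \notin V ->
  A :\ z \in shadow k (compress_fam U V F) ->
  exists2 C, C \in F & swap U V A :\ z \subset C.
Proof.
move=> AF sVA dUA lowA sAnF zA zV; rewrite inE => /andP[_ /exists_inP[D DF' sAzD]].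
have sVD : V \subset D.
  apply: subset_trans sAzD; rewrite subsetD1 sVA; exact: zV.
have [DF cDF] := compress_fam_supset DF' sVD.
have [w wAz eD] : exists2 w, w \notin A :\ z & D = w |: A :\ z.
  apply: subset_cardS => //; move: (subsetP F_EM A AF) (subsetP F_EM D DF).
  by rewrite !EM_low => /andP[/eqP cA _] /andP[/eqP ->]; rewrite -cA (cardsD1 z A) zA.
have wA : w \notin A.
  move: wAz; rewrite !inE negb_and negbK => /orP[/eqP wz|//].
  by move: cDF; rewrite eD wz setD1K // (compressE sVA dUA lowA) (negbTE sAnF).
by rewrite eD in DF cDF; apply: (neighbour_covered AF sVA dUA lowA zA zV wA).
Qed.

Lemma shadow_compress_fam_swap B :
  B \in shadow k (compress_fam U V F) -> B \notin shadow k F ->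
  [/\ U \subset B, [disjoint V & B]
    & swap V U B \in shadow k F :\: shadow k (compress_fam U V F)].
Proof.
move=> B' nB; have [A [z [AF cAnF zB eAz]]] := new_shadow_member B' nB.
have /compressP[sVA dUA lowA eA] : compress U V A != A by apply: contraNneq cAnF => ->.
rewrite eA in cAnF eAz; have eB : B = swap U V A :\ z by rewrite eAz setU1K.
have cB : #|B| = k.-1 by move: B'; rewrite inE => /andP[/eqP].
have notcov C : C \in F -> ~~ (B \subset C).
  move=> CF; apply: contra nB => sBC.
  by rewrite inE cB eqxx; apply/exists_inP; exists C.
have [cA lowA'] : #|A| = k /\ t <= low A.
  by move: (subsetP F_EM A AF); rewrite EM_low => /andP[/eqP].
have zU : z \notin U.
  apply/negP=> zU; have zAV : z \notin A :\: V by rewrite inE (disjointFr dUA zU) andbF.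
  have lowS : t <= (low (swap (U :\ z) V A)).+1.
    by rewrite swapD1U //; apply: leq_trans lowA (low_leD1 _ z).
  have [C CF] := swap_drop_covered AF zU sVA (disjointWl (subD1set U z) dUA) lowA' lowS.
  by rewrite swapD1U // -eB; apply/negP/notcov.
have [zV zA] : z \notin V /\ z \in A.
  by move: (setU11 z B); rewrite -eAz !inE (negbTE zU) orbF => /andP.
split.
- rewrite eB; apply/subsetP=> i iU; rewrite !inE iU orbT andbT.
  by apply: contraNneq zU => <-.
- rewrite eB disjoint_subset; apply/subsetP=> i iV.
  by rewrite !inE iV (disjointFl dUV iV) andbF.
rewrite eB swapD1A // swapK // inE; apply/andP; split.
  apply/negP=> /(shadow_neighbour_covered AF sVA dUA lowA cAnF zA zV)[C CF].
  by rewrite -eB; apply/negP/notcov.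
rewrite inE -cA (cardsD1 z A) zA eqxx; apply/exists_inP; exists A => //.
exact: subD1set.
Qed.

Lemma shadow_compress_fam_le : #|shadow k (compress_fam U V F)| <= #|shadow k F|.
Proof.
have dVU : [disjoint V & U] by rewrite disjoint_sym.
apply: (@leq_card_setD_inj _ _ _ (swap V U)) => [B1 B2|B].
  rewrite !in_setD => /andP[nB1 B1'] /andP[nB2 B2'] e12.
  have [sUB1 dVB1 _] := shadow_compress_fam_swap B1' nB1.
  have [sUB2 dVB2 _] := shadow_compress_fam_swap B2' nB2.
  by rewrite -(swapK sUB1 dVB1 dVU) -(swapK sUB2 dVB2 dVU) e12.
by rewrite in_setD => /andP[nB B']; case: (shadow_compress_fam_swap B' nB).
Qed.

End ShadowOfCompression.

Lemma colex_pair_drop (U V : T) x : colex_pair U V -> x \in U -> 1 < #|U| ->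
  exists2 y, y \in V & ((y < s) || (low V == 0)) && colex_pair (U :\ x) (V :\ y).
Proof.
case/colex_pairP=> dUV eUV [x0 x0V maxx] xU U_gt1.
have [y [yV yx0 ylow]] : exists y, [/\ y \in V, y != x0 & (y < s) || (low V == 0)].
  have /card_gt0P[y0 /setD1P[y0x0 y0V]] : 0 < #|V :\ x0|.
    by move: U_gt1; rewrite eUV (cardsD1 x0 V) x0V.
  have [lowV0|/negbTE lowV] := eqVneq (low V) 0; first by exists y0; rewrite orbT.
  have /card_gt0P[v] : 0 < low V by rewrite lt0n lowV.
  rewrite !inE => /andP[vV vs].
  have [vx0|vx0] := eqVneq v x0; last by exists v; rewrite vs.
  exists y0; split=> //; rewrite orbF; apply: leq_ltn_trans (maxx y0 _) _.
    by rewrite inE y0V orbT.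
  by rewrite -vx0.
exists y; rewrite // ylow; apply/colex_pairP; split.
- exact: disjointW (subD1set U x) (subD1set V y) dUV.
- by apply/eqP; rewrite -(eqn_add2l true) -{1}xU -yV -!cardsD1 eUV.
- exists x0; first by rewrite !inE eq_sym yx0.
  move=> i /setUP[/setD1P[_ iU]|/setD1P[_ iV]]; apply: maxx;
    by rewrite inE ?iU ?iV ?orbT.
Qed.

Lemma colex_pair_trade (U V : T) w : colex_pair U V ->
  w \notin U -> w \notin V -> s <= w -> low U < low V ->
  exists2 v, v \in V & (v < s) && colex_pair U (w |: V :\ v).
Proof.
case/colex_pairP=> dUV eUV [x0 x0V maxx] wU wV sw lowUV.
have sx0 : s <= x0.
  rewrite leqNgt; apply: contraTN lowUV => x0s; rewrite -leqNgt.
  have sub (X : T) : X \subset U :|: V -> X \subset lowset.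
    move=> sX; apply/subsetP=> i /(subsetP sX)/maxx ix0; rewrite inE.
    exact: leq_ltn_trans ix0 x0s.
  by rewrite !low_lowset ?eUV ?sub ?subsetUl ?subsetUr.
have /card_gt0P[v] : 0 < low V by apply: leq_ltn_trans lowUV.
rewrite !inE => /andP[vV vs]; exists v; rewrite // vs /=.
have vx0 : v != x0 by apply: contraTneq vs => ->; rewrite -leqNgt.
apply/colex_pairP; split.
- rewrite disjoint_sym disjoint_subset; apply/subsetP=> i /setU1P[->|/setD1P[_ iV]].
    by rewrite inE.
  by rewrite inE (disjointFl dUV iV).
- by rewrite cardsU1 !inE (negbTE wV) andbF eUV (cardsD1 v V) vV.
- have [x0w|wx0] := leqP x0 w.
    exists w; first exact: setU11.
    move=> i /setUP[iU|/setU1P[->//|/setD1P[_ iV]]];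
      apply: leq_trans x0w; apply: maxx; by rewrite inE ?iU ?iV ?orbT.
  exists x0; first by apply/setU1r/setD1P; rewrite eq_sym.
  move=> i /setUP[iU|/setU1P[->|/setD1P[_ iV]]]; rewrite ?(ltnW wx0) //;
    apply: maxx; by rewrite inE ?iU ?iV ?orbT.
Qed.

(* Dropping one point from each of U and V, or trading a point of V inside [s]
   for one outside, lowers this rank. *)
Definition pair_rank (U V : T) := #|U| + low V.

Section MinimalPair.
Variables (U V : T) (F : {set T}).
Hypothesis uUV : colex_pair U V.
Hypothesis smaller_compressed : forall U' V', colex_pair U' V' ->
  pair_rank U' V' < pair_rank U V -> compressed U' V' F.

Lemma minimal_compressed_drop x : x \in U ->
  exists2 y, y \in V & ((y < s) || (low V == 0)) && compressed (U :\ x) (V :\ y) F.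
Proof.
move=> xU; case/colex_pairP: (uUV) => _ eUV _.
have cU := cardsD1 x U; rewrite xU in cU.
have [U_gt1|U_le1] := ltnP 1 #|U|.
  have [y yV /andP[ylow u']] := colex_pair_drop uUV xU U_gt1.
  exists y; rewrite // ylow smaller_compressed // /pair_rank cU (lowD1 yV) -addSn.
  exact: leq_add (leq_addl _ _).
have /card_gt0P[y yV] : 0 < #|V| by rewrite -eUV cU.
have /eqP/cards0_eq-> : #|U :\ x| == 0 by rewrite -leqn0 -(leq_add2l true) -cU.
have /cards0_eq V0 : #|V :\ y| = 0.
  by apply/eqP; rewrite -leqn0 -(leq_add2l (y \in V)) -cardsD1 -eUV yV.
exists y; rewrite // V0 compressed0 andbT (lowD1 yV) V0 /low set0I cards0.
by case: (y < s).
Qed.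

Lemma minimal_compressed_trade w :
  w \notin U -> w \notin V -> s <= w -> low U < low V ->
  exists2 v, v \in V & (v < s) && compressed U (w |: V :\ v) F.
Proof.
move=> wU wV sw lowUV.
have [v vV /andP[vs u']] := colex_pair_trade uUV wU wV sw lowUV.
exists v; rewrite // vs smaller_compressed // /pair_rank ltn_add2l.
rewrite (lowU1 (x := w)); last by rewrite !inE (negbTE wV) andbF.
by rewrite [w < s]ltnNge sw (lowD1 vV) vs.
Qed.

End MinimalPair.

Lemma minimal_uncompressed_pair (F : {set T}) :
  ~~ [forall P : T * T, colex_pair P.1 P.2 ==> compressed P.1 P.2 F] ->
  exists U V, [/\ colex_pair U V, ~~ compressed U V F
    & forall U' V', colex_pair U' V' -> pair_rank U' V' < pair_rank U V ->
                    compressed U' V' F].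
Proof.
case/forallPn=> P0; rewrite negb_imply => P0bad.
pose bad (P : T * T) := colex_pair P.1 P.2 && ~~ compressed P.1 P.2 F.
have [[U V] /andP[uUV ncUV] minUV] :=
  @arg_minnP _ P0 bad (fun P => pair_rank P.1 P.2) P0bad.
exists U, V; split=> // U' V' uUV' ltUV; apply: contraTT ltUV => ncUV'.
by rewrite -leqNgt; apply: (minUV (U', V')); rewrite /bad /= uUV'.
Qed.

Lemma shadow_firstm_le (F : {set T}) : F \subset EMk ->
  #|shadow k (firstm #|F| EMk)| <= #|shadow k F|.
Proof.
move=> sFE; have [N] := ubnP (fam_weight F); elim: N F sFE => // N IH F sFE wF.
have [allc|/minimal_uncompressed_pair[U [V [uUV ncUV smaller]]]] :=
  boolP [forall P : T * T, colex_pair P.1 P.2 ==> compressed P.1 P.2 F].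
  rewrite firstm_downset //; apply: compressed_colex_downset => // U V uUV.
  exact: implyP (forallP allc (U, V)) uUV.
case/colex_pairP: (uUV) => dUV eUV [x0 x0V _].
have V_neq0 : V != set0 by apply/set0Pn; exists x0.
rewrite -(card_compress_fam F dUV); apply: leq_trans (IH _ _ _) _.
- exact: compress_fam_EM.
- by rewrite -ltnS; apply: leq_trans wF; apply: fam_weight_compress_lt.
apply: shadow_compress_fam_le => //.
- exact: minimal_compressed_drop.
- exact: minimal_compressed_trade.
Qed.

End Compression.

Theorem lemma2p5 (n k s t : nat) (H : {set {set 'I_n}}) (m : nat) :
  1 <= k -> k <= n -> t <= s ->
  H \subset EM n k s t -> #|H| = m ->
  #|shadow k (firstm m (EM n k s t))| <= #|shadow k H|.
Proof.
by move=> _ _ _ sHE <-; apply: shadow_firstm_le.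
Qed.
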